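(* There is a functor $E:\mathbf{FinGraph}^<_\star\to\mathbf{FinLoset}$ that linearly orders the vertices of a given graph according to the ordering on the neighborhood of its distinguished point: for $G$ with distinguished point $v_0$, $E(G)$ is the set $\{v_0\}\cup\{u : v_0\to u\}$ with $v_0$ least and, for $u,v\neq v_0$, $u<v$ iff $v_0\to u\triangleleft v_0\to v$; and for a morphism $h$, $E(h)(v)=h(v)$.
   Context: A (directed) graph is $(V,\to)$ with $\to\subseteq V\times V$; $N(u)$ is the set of outgoing edges of $u$. A pointed graph has a distinguished vertex $v_0$; connected means every vertex is reachable by a path from $v_0$. A finite edge-ordered graph is a finite graph with a strict linear order $\triangleleft$ on each neighborhood. A homomorphism of finite pointed edge-ordered graphs $h:G\to H$ is a vertex map with (i) $u\to v$ implies $h(u)\to h(v)$; (ii) the distinguished vertex of $G$ is the unique vertex mapped to the distinguished vertex of $H$; (iii) $u\to v_1\triangleleft u\to v_2$ implies $h(u)\to h(v_1)\triangleleft h(u)\to h(v_2)$. $\mathbf{FinGraph}^<_\star$ is the category of connected, finite, pointed, edge-ordered graphs with such homomorphisms; $\mathbf{FinLoset}$ is the category of finite linearly ordered sets with monotone functions. *)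

From mathcomp Require Import all_boot.
Set Implicit Arguments. Unset Strict Implicit. Unset Printing Implicit Defensive.

(* A finite pointed graph with an ordering on each neighbourhood:
   [eord u v1 v2] means  (u -> v1) <| (u -> v2). *)
Record pegraph := FGraph {
  vert : finType;
  edge : rel vert;
  eord : vert -> rel vert;
  root : vert }.

Definition edge_ordered (G : pegraph) : Prop :=
  forall u : vert G,
    (forall v1 v2, eord u v1 v2 -> edge u v1 && edge u v2) /\
    (forall v, ~~ eord u v v) /\
    (forall v1 v2 v3, eord u v1 v2 -> eord u v2 v3 -> eord u v1 v3) /\
    (forall v1 v2, edge u v1 -> edge u v2 -> v1 != v2 ->
        eord u v1 v2 || eord u v2 v1).

Definition connected_pt (G : pegraph) : Prop :=
  forall v : vert G, connect (@edge G) (root G) v.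

Definition is_obj (G : pegraph) : Prop := edge_ordered G /\ connected_pt G.

Definition is_hom (G H : pegraph) (h : vert G -> vert H) : Prop :=
  (forall u v, edge u v -> edge (h u) (h v)) /\
  (forall v, h v = root H <-> v = root G) /\
  (forall u v1 v2, edge u v1 -> edge u v2 -> eord u v1 v2 ->
      eord (h u) (h v1) (h v2)).

Definition Eset (G : pegraph) : pred (vert G) :=
  fun v => (v == root G) || edge (root G) v.

Definition Elt (G : pegraph) (u v : vert G) : bool :=
  ((u == root G) && (v != root G)) ||
  [&& u != root G, v != root G & eord (root G) u v].

Definition Ele (G : pegraph) (u v : vert G) : bool := (u == v) || Elt u v.
Arguments Eset G _ : clear implicits.

From Pilot Require Import Defs.
From mathcomp Require Import all_boot.

(* E(G) only sees the edge order at the distinguished vertex v0, which is a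
   strict linear order on N(v0); putting v0 below everything keeps it one.
   A morphism fixes v0, maps no other vertex to it, and preserves edges and
   the edge order at v0, so it restricts to a monotone map E(G) -> E(H). *)

Section EOrder.

Variable G : pegraph.
Hypothesis eoG : edge_ordered G.

Lemma Elt_irr (x : vert G) : ~~ Elt x x.
Proof.
have [_ [eord_irr _]] := eoG (Defs.root G).
by rewrite /Elt (negbTE (eord_irr x)) !andbF andbN.
Qed.

Lemma Elt_trans (x y z : vert G) : Elt x y -> Elt y z -> Elt x z.
Proof.
have [_ [_ [eord_trans _]]] := eoG (Defs.root G).
rewrite /Elt.
case: (x =P Defs.root G) => [->|_]; case: (y =P Defs.root G) => [->|_];
  case: (z =P Defs.root G) => [->|_] //=.
exact: eord_trans.
Qed.

Lemma Elt_total : {in Eset G &, forall x y, x != y -> Elt x y || Elt y x}.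
Proof.
have [_ [_ [_ eord_total]]] := eoG (Defs.root G).
move=> x y; rewrite !unfold_in /Eset /Elt.
have [->|nx] := eqVneq x (Defs.root G); have [->|ny] := eqVneq y (Defs.root G) => //=.
exact: eord_total.
Qed.

End EOrder.

Section EMorphism.

Variables (G H : pegraph) (h : vert G -> vert H).
Hypotheses (eoG : edge_ordered G) (hom_h : is_hom h).

Lemma hom_eq_root (v : vert G) : (h v == Defs.root H) = (v == Defs.root G).
Proof. by have [_ [h_root _]] := hom_h; apply/eqP/eqP => /h_root. Qed.

Lemma hom_root : h (Defs.root G) = Defs.root H.
Proof. by apply/eqP; rewrite hom_eq_root. Qed.

Lemma hom_Eset : {in Eset G, forall x, h x \in Eset H}.
Proof.
have [h_edge _] := hom_h.
move=> x; rewrite !unfold_in /Eset hom_eq_root -hom_root.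
by case/orP=> [-> // | /h_edge ->]; rewrite orbT.
Qed.

Lemma hom_Elt (x y : vert G) : Elt x y -> Elt (h x) (h y).
Proof.
have [_ [_ h_eord]] := hom_h; have [eord_edge _] := eoG (Defs.root G).
rewrite /Elt !hom_eq_root -hom_root.
case/orP=> [-> // | /and3P[-> -> xy]].
by case/andP: (eord_edge _ _ xy) => ex ey; rewrite h_eord ?orbT.
Qed.

Lemma hom_Ele (x y : vert G) : Ele x y -> Ele (h x) (h y).
Proof. by case/orP=> [/eqP -> | /hom_Elt xy]; rewrite /Ele ?eqxx ?xy ?orbT. Qed.

End EMorphism.

Theorem lemma9p3 :
  (* object part: E(G) is a finite linearly ordered set *)
  (forall G : pegraph, is_obj G ->
     {in Eset G, forall x, ~~ Elt x x} /\
     {in Eset G & &, forall x y z, Elt x y -> Elt y z -> Elt x z} /\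
     {in Eset G &, forall x y, x != y -> Elt x y || Elt y x}) /\
  (* morphism part: E(h) = h restricted to E(G) is a well-defined monotone map *)
  (forall (G H : pegraph) (h : vert G -> vert H),
     is_obj G -> is_obj H -> is_hom h ->
     {in Eset G, forall x, h x \in Eset H} /\
     {in Eset G &, forall x y, Ele x y -> Ele (h x) (h y)}).
Proof.
split=> [G [eoG _] | G H h [eoG _] _ hom_h].
  split; [|split]; first by move=> x _; apply: Elt_irr.
    by move=> x y z _ _ _; apply: Elt_trans.
  exact: Elt_total.
split; first exact: hom_Eset.
by move=> x y _ _; apply: hom_Ele.
Qed.
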